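(* Let $(B,\lfloor\cdot,\cdot\rfloor,\|\cdot\|)$ be an SSDB space with quadratic form $q$ and let $A\subset B$ be $q$-positive. The following are equivalent: (1) $A$ is maximally $q$-positive; (2) $A+C=B$ for every maximally $(-q)$-positive set $C\subset B$ such that $\Phi_{-q,C}$ is finite-valued; (3) there exist a set $C\subset B$ with $A+C=B$ and a point $p\in C$ such that $q(z-p)<0$ for all $z\in C\setminus\{p\}$.
   Context: An SSD space is a pair $(B,\lfloor\cdot,\cdot\rfloor)$ with $B$ a nonzero real vector space and $\lfloor\cdot,\cdot\rfloor$ a symmetric bilinear form; $q(b)=\frac12\lfloor b,b\rfloor$. An SSDB space is a triple $(B,\lfloor\cdot,\cdot\rfloor,\|\cdot\|)$ such that $(B,\lfloor\cdot,\cdot\rfloor)$ is an SSD space, $(B,\|\cdot\|)$ is a Banach space, and the map $i:B\to B^*$, $i(b)=\lfloor\cdot,b\rfloor$, is a surjective isometry onto the dual $B^*$. For a quadratic form $Q\in\{q,-q\}$ (note $-q$ is the quadratic form of the SSD space $(B,-\lfloor\cdot,\cdot\rfloor)$): a nonempty set $A$ is $Q$-positive if $Q(b-c)\ge0$ for all $b,c\in A$, and maximally $Q$-positive if it is $Q$-positive and not properly contained in another $Q$-positive set. For nonempty $C\subset B$, $\Phi_{-q,C}(x)=\sup_{c\in C}\{-\lfloor x,c\rfloor+q(c)\}$. *)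

From HB Require Import structures.
From mathcomp Require Import all_boot all_order all_algebra.
From mathcomp Require Import all_classical all_reals all_analysis.
Set Implicit Arguments. Unset Strict Implicit. Unset Printing Implicit Defensive.
Import Order.TTheory GRing.Theory Num.Theory.
Import numFieldNormedType.Exports.
Local Open Scope classical_set_scope.
Local Open Scope ring_scope.

Section SSDB.
Variables (R : realType) (B : completeNormedModType R).

Definition dual_elt (f : B -> R) : Prop :=
  (forall x y : B, f (x + y) = f x + f y) /\
  (forall (a : R) (x : B), f (a *: x) = a * f x) /\
  continuous f.

Definition dual_norm_is (f : B -> R) (c : R) : Prop :=
  (forall x : B, `|x| <= 1 -> `|f x| <= c) /\
  (forall e : R, 0 < e -> exists x : B, `|x| <= 1 /\ c - e < `|f x|).

(** SSD space: nonzero real vector space with a symmetric bilinear form;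
    SSDB: additionally Banach and b |-> bl . b is a surjective isometry onto B^* *)
Definition SSDB (bl : B -> B -> R) : Prop :=
  (exists b : B, b != 0) /\
  (forall b c : B, bl b c = bl c b) /\
  (forall x y c : B, bl (x + y) c = bl x c + bl y c) /\
  (forall (a : R) (x c : B), bl (a *: x) c = a * bl x c) /\
  (forall b : B, dual_elt (fun x => bl x b) /\ dual_norm_is (fun x => bl x b) `|b|) /\
  (forall f : B -> R, dual_elt f -> exists b : B, forall x, f x = bl x b).

Definition qf (bl : B -> B -> R) (b : B) : R := bl b b / 2.

Definition Qpositive (Q : B -> R) (A : set B) : Prop :=
  A !=set0 /\ (forall b c : B, A b -> A c -> 0 <= Q (b - c)).

Definition maxQpositive (Q : B -> R) (A : set B) : Prop :=
  Qpositive Q A /\ (forall A' : set B, Qpositive Q A' -> A `<=` A' -> A' = A).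

Definition Phi_mq (bl : B -> B -> R) (C : set B) (x : B) : \bar R :=
  ereal_sup [set ((- bl x c + qf bl c)%:E) | c in C].

Definition setsum (A C : set B) : set B := [set a + c | a in A & c in C].

End SSDB.

(* The heart is (1) => (2).  After translating [A] it suffices to find [c0]
   in [A] with [- c0] in [C].  The function [g z = Phi_{-q,C} (- z)] is convex
   and finite, hence by Baire bounded above on a ball; the set [E] of pairs
   [(y, s)] with [bl y a - q a <= s] for all [a] in [A] is convex, and the
   maximality of [A] and [C] gives [s + g y >= 0] on [E].  A Hahn-Banach
   sandwich argument, in which [bl] identifies [B] with its dual, produces [c0]
   with [bl (y - z) c0 <= s + g z], i.e. [q (c0 + c) <= q (c0 - a)] for [a] in
   [A] and [c] in [C]; maximality then forces [A c0] and [C (- c0)].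
   For (2) => (3) take [C = {b | q b = - |b|^2/2}] and [p = 0]: the same
   sandwich argument splits every [x] as [(x - w) + w] with [x - w] in [C] and
   [q w = |w|^2/2], which makes [C] maximally (-q)-positive.
   For (3) => (1), if [b] is q-positive relative to [A], write [b + p = a + c];
   then [q (c - p) = q (b - a) >= 0] forces [c = p], so [b = a]. *)

From HB Require Import structures.
From mathcomp Require Import all_boot all_order all_algebra.
From mathcomp Require Import all_classical all_reals all_analysis.
From mathcomp Require Import ring lra.
Import Order.TTheory GRing.Theory Num.Theory.
Import numFieldNormedType.Exports.
Local Open Scope classical_set_scope.
Local Open Scope ring_scope.
Set Implicit Arguments. Unset Strict Implicit.

Section Convexity.
Variables (R : realType) (V : lmodType R).

Definition convex_pairs (E : set (V * R)) :=
  forall x1 r1 x2 r2 l, E (x1, r1) -> E (x2, r2) -> 0 <= l -> l <= 1 ->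
    E (l *: x1 + (1 - l) *: x2, l * r1 + (1 - l) * r2).

Definition convex_fun (g : V -> R) :=
  forall a b l, 0 <= l -> l <= 1 -> g (l *: a + (1 - l) *: b) <= l * g a + (1 - l) * g b.

End Convexity.

Lemma half_sqr_norm_convex (R : realType) (V : normedModType R) :
  convex_fun (fun y : V => `|y| ^+ 2 / 2).
Proof.
move=> a b l l0 l1; have l1' : 0 <= 1 - l by rewrite subr_ge0.
have ab_le : `|l *: a + (1 - l) *: b| <= l * `|a| + (1 - l) * `|b|.
  by apply: (le_trans (ler_normD _ _)); rewrite !normrZ (ger0_norm l0) (ger0_norm l1').
have : `|l *: a + (1 - l) *: b| ^+ 2 <= (l * `|a| + (1 - l) * `|b|) ^+ 2.
  by rewrite lerXn2r ?nnegrE // addr_ge0 // mulr_ge0.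
have : 0 <= l * (1 - l) * (`|a| - `|b|) ^+ 2
  by apply: mulr_ge0; [exact: mulr_ge0 | exact: sqr_ge0].
nra.
Qed.

Section LinearMinorant.
Variables (R : realType) (V : lmodType R) (Gam : set (V * R)).
Hypotheses (Gam_conv : convex_pairs Gam) (Gam_tot : forall x, exists r, Gam (x, r)).

Definition linear_graph_below (G : set (V * R)) :=
  [/\ (forall x1 a1 x2 a2, G (x1, a1) -> G (x2, a2) -> G (x1 + x2, a1 + a2)),
      (forall k x a, G (x, a) -> G (k *: x, k * a)),
      (forall x a b, G (x, a) -> G (x, b) -> a = b) &
      (forall x a r, G (x, a) -> Gam (x, r) -> a <= r)].

Lemma linear_graph_below_bigcup (F : set (set (V * R))) :
  F `<=` linear_graph_below -> total_on F subset ->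
  linear_graph_below (\bigcup_(X in F) X).
Proof.
move=> FG totF; split.
- move=> x1 a1 x2 a2 [X1 FX1 h1] [X2 FX2 h2].
  have [s12|s21] := totF _ _ FX1 FX2.
  + have [GD _ _ _] := FG _ FX2; exists X2 => //; exact: GD (s12 _ h1) h2.
  + have [GD _ _ _] := FG _ FX1; exists X1 => //; exact: GD h1 (s21 _ h2).
- move=> k x a [X FX h]; have [_ GZ _ _] := FG _ FX; exists X => //; exact: GZ.
- move=> x a b [X1 FX1 h1] [X2 FX2 h2].
  have [s12|s21] := totF _ _ FX1 FX2.
  + have [_ _ Gfun _] := FG _ FX2; exact: Gfun (s12 _ h1) h2.
  + have [_ _ Gfun _] := FG _ FX1; exact: Gfun h1 (s21 _ h2).
- by move=> x a r [X FX h]; have [_ _ _ Gle] := FG _ FX; exact: Gle.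
Qed.

Section Extension.
Variables (G : set (V * R)) (v : V).
Hypothesis (G_lin : linear_graph_below G).

Lemma linear_graph_below_slope m1 a1 t r1 m2 a2 s r2 :
  G (m1, a1) -> 0 < t -> Gam (m1 + t *: v, r1) ->
  G (m2, a2) -> 0 < s -> Gam (m2 - s *: v, r2) ->
  t * (a2 - r2) <= s * (r1 - a1).
Proof.
move=> G1 t0 Gam1 G2 s0 Gam2; have [GD GZ _ Gle] := G_lin.
have st0 : 0 < s + t by rewrite addr_gt0.
pose l := s / (s + t).
have l0 : 0 <= l by rewrite divr_ge0 // ltW.
have l1 : l <= 1 by rewrite ler_pdivrMr // mul1r lerDl ltW.
(* the weights are chosen so that the [v]-components cancel *)
have lts : l * t = (1 - l) * s by rewrite /l; field; rewrite lt0r_neq0.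
have := Gam_conv Gam1 Gam2 l0 l1.
rewrite scalerDr scalerBr !scalerA lts -addrA (addrC ((_ * s) *: v)) subrK.
move/(Gle _ _ _ (GD _ _ _ _ (GZ l _ _ G1) (GZ (1 - l) _ _ G2))).
have -> : l * a1 + (1 - l) * a2 = (s * a1 + t * a2) / (s + t).
  by rewrite /l; field; rewrite lt0r_neq0.
have -> : l * r1 + (1 - l) * r2 = (s * r1 + t * r2) / (s + t).
  by rewrite /l; field; rewrite lt0r_neq0.
rewrite ler_pM2r ?invr_gt0 //; lra.
Qed.

Lemma linear_graph_below_exists_value : G (0, 0) ->
  exists c, forall m a t r, G (m, a) -> Gam (m + t *: v, r) -> a + t * c <= r.
Proof.
move=> G00; have [_ _ _ Gle] := G_lin.
pose L := [set y | exists m a s r,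
  [/\ G (m, a), 0 < s, Gam (m - s *: v, r) & y = (a - r) / s]].
have L_ub m1 a1 t r1 : G (m1, a1) -> 0 < t -> Gam (m1 + t *: v, r1) ->
    ubound L ((r1 - a1) / t).
  move=> G1 t0 Gam1 _ [m2 [a2 [s [r2 [G2 s0 Gam2 ->]]]]].
  rewrite ler_pdivrMr // mulrAC ler_pdivlMr // mulrC (mulrC (r1 - a1)).
  exact: linear_graph_below_slope Gam1 G2 s0 Gam2.
have [rm Gam_m] := Gam_tot (0 - 1 *: v).
have [rp Gam_p] := Gam_tot (0 + 1 *: v).
have L_sup : has_sup L.
  split; first by exists ((0 - rm) / 1), 0, 0, 1, rm.
  by exists ((rp - 0) / 1); apply: (L_ub 0 0 1 rp).
exists (sup L) => m a t r Gma; have [t_lt0|t_gt0|->] := ltgtP t 0.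
- rewrite -[t]opprK scaleNr mulNr => Gam_mt.
  have : (a - r) / - t <= sup L.
    by apply: sup_upper_bound => //; exists m, a, (- t), r; rewrite oppr_gt0.
  rewrite ler_pdivrMr ?oppr_gt0 //; nra.
- move=> Gam_mt; have : sup L <= (r - a) / t.
    by apply: ge_sup; [case: L_sup | exact: L_ub Gma t_gt0 Gam_mt].
  rewrite ler_pdivlMr //; nra.
- by rewrite scale0r addr0 mul0r addr0; exact: Gle.
Qed.

Lemma linear_graph_below_adjoin c : (forall a, ~ G (v, a)) ->
  (forall m a t r, G (m, a) -> Gam (m + t *: v, r) -> a + t * c <= r) ->
  linear_graph_below [set p | exists m a t, G (m, a) /\ p = (m + t *: v, a + t * c)].
Proof.
move=> Gv Gc; have [GD GZ Gfun _] := G_lin; split.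
- move=> _ _ _ _ [m1 [a1 [t1 [G1 [-> ->]]]]] [m2 [a2 [t2 [G2 [-> ->]]]]].
  exists (m1 + m2), (a1 + a2), (t1 + t2); split; first exact: GD.
  by congr pair; rewrite ?scalerDl ?mulrDl addrACA.
- move=> k _ _ [m [a [t [Gm [-> ->]]]]].
  exists (k *: m), (k * a), (k * t); split; first exact: GZ.
  by rewrite scalerDr scalerA mulrDr mulrA.
- move=> x _ _ [m1 [a1 [t1 [G1 [-> ->]]]]] [m2 [a2 [t2 [G2 [e ->]]]]].
  have [t12|t12] := eqVneq t1 t2.
    by move: e G1; rewrite t12 => /addIr -> G1; rewrite (Gfun _ _ _ G1 G2).
  (* otherwise [v] would lie in the domain of [G] *)
  exfalso; apply: (Gv ((t1 - t2)^-1 * (a2 - a1))).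
  have -> : v = (t1 - t2)^-1 *: (m2 - m1).
    apply: (@scalerI _ _ (t1 - t2)); first by rewrite subr_eq0.
    rewrite scalerA mulfV ?subr_eq0 // scale1r scalerBl.
    by apply/eqP; rewrite subr_eq addrAC -e addrAC subrr add0r.
  by apply: (GZ); have := GD _ _ _ _ G2 (GZ (-1) _ _ G1); rewrite scaleN1r mulN1r.
- by move=> _ _ r [m [a [t [Gm [-> ->]]]]]; exact: Gc.
Qed.

End Extension.

Lemma linear_minorant : (forall r, Gam (0, r) -> 0 <= r) ->
  exists phi : {linear V -> R^o}, forall x r, Gam (x, r) -> phi x <= r.
Proof.
move=> Gam0.
have [G [G_lin G_max]] := Zorn_bigcup linear_graph_below_bigcup.
have [GD GZ Gfun Gle] := G_lin.
have G00 : G (0, 0).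
  apply: contrapT => nG00.
  have G0 : G = set0.
    apply/seteqP; split => // -[x a] Gxa; apply: nG00.
    by have := GZ 0 _ _ Gxa; rewrite scale0r mul0r.
  apply: (G_max [set (0, 0)]); first by rewrite G0; split => // /(_ (0, 0) erefl).
  split.
  - by move=> x1 a1 x2 a2 [-> ->] [-> ->]; rewrite !addr0.
  - by move=> k x a [-> ->]; rewrite scaler0 mulr0.
  - by move=> x a b [_ ->] [_ ->].
  - by move=> x a r [-> ->]; exact: Gam0.
have G_tot v : exists a, G (v, a).
  apply: contrapT => nGv.
  have Gv a : ~ G (v, a) by move=> Gva; apply: nGv; exists a.
  have [c Gc] := linear_graph_below_exists_value v G_lin G00.
  apply: (G_max _ _ (linear_graph_below_adjoin G_lin Gv Gc)); split.
    by move=> [x a] Gxa; exists x, a, 0; rewrite scale0r mul0r !addr0.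
  move=> /(_ (v, c)) G'G; apply: (Gv c); apply: G'G.
  by exists 0, 0, 1; rewrite scale1r mul1r !add0r.
pose phi x := xget 0 [set a | G (x, a)].
have G_phi x : G (x, phi x) by apply: (xgetPex 0 (G_tot x)).
have phi_lin : linear phi.
  by move=> k x y; apply: (Gfun (k *: x + y)); [exact: G_phi | exact: GD (GZ _ _ _ _) _].
pose Phi : {linear V -> R^o} := HB.pack phi (GRing.isLinear.Build _ _ _ _ phi phi_lin).
by exists Phi => x r; exact: Gle (G_phi x).
Qed.

End LinearMinorant.

Section SupBoundedOnBall.
Variables (R : realType) (B : completeNormedModType R).

(* Baire: the open sets [O n] where some [f i] exceeds [n] have empty
   intersection, so one of them is not dense. *)
Lemma sup_continuous_bounded_on_ball (T : Type) (C : set T) (f : T -> B -> R) :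
  (forall i, continuous (f i)) -> (forall x, exists M, forall i, C i -> f i x <= M) ->
  exists w (d M : R), 0 < d /\ forall z i, `|z - w| < d -> C i -> f i z <= M.
Proof.
move=> f_cont f_bnd.
pose O (n : nat) := \bigcup_(i in C) (f i @^-1` [set y | n%:R < y]).
have O_open n : open (O n).
  by apply: bigcup_open => i _; apply: open_comp; [move=> z _; exact: f_cont | exact: open_gt].
have [[n /denseNE [U [[w Uw] UO]]]|O_dense] := pselect (exists n, ~ dense (O n)).
  have /nbhs_normP [d d0 dU] := open_nbhs_nbhs Uw.
  exists w, d, n%:R; split => // z i zw Ci; rewrite leNgt; apply/negP => fz.
  have : (U `&` O n) z by split; [apply: dU; rewrite /ball_ /= distrC | exists i].
  by rewrite UO.
have [x [_ Ox]] : exists x, (setT `&` \bigcap_n O n) x.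
  apply: Baire; last exact: openT; last by exists 0.
  by move=> n; split => //; apply: contrapT => nd; apply: O_dense; exists n.
have [M fM] := f_bnd x.
have [i Ci /= fx] := Ox (Num.truncn M).+1 I.
by have := fM i Ci; have := truncnS_gt M; lra.
Qed.

End SupBoundedOnBall.

Section SSDBSpace.
Variables (R : realType) (B : completeNormedModType R) (bl : B -> B -> R).
Hypothesis hB : SSDB bl.
Local Notation q := (qf bl).

Lemma blC b c : bl b c = bl c b.
Proof. by case: hB => _ []. Qed.

Lemma blDl x y c : bl (x + y) c = bl x c + bl y c.
Proof. by case: hB => _ [_ []]. Qed.

Lemma blZl a x c : bl (a *: x) c = a * bl x c.
Proof. by case: hB => _ [_ [_ []]]. Qed.

Lemma bl_dual b : dual_elt (bl^~ b) /\ dual_norm_is (bl^~ b) `|b|.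
Proof. by case: hB => _ [_ [_ [_ []]]]. Qed.

Lemma bl_surj f : dual_elt f -> exists b, forall x, f x = bl x b.
Proof. by case: hB => _ [_ [_ [_ [_]]]]; apply. Qed.

Lemma bl_continuous b : continuous (bl^~ b).
Proof. by have [[_ []]] := bl_dual b. Qed.

Lemma blDr x y c : bl c (x + y) = bl c x + bl c y.
Proof. by rewrite !(blC c) blDl. Qed.

Lemma blZr a x c : bl c (a *: x) = a * bl c x.
Proof. by rewrite !(blC c) blZl. Qed.

Lemma bl0l c : bl 0 c = 0.
Proof. by rewrite -(scale0r 0) blZl mul0r. Qed.

Lemma blNl x c : bl (- x) c = - bl x c.
Proof. by rewrite -scaleN1r blZl mulN1r. Qed.

Lemma blNr x c : bl c (- x) = - bl c x.
Proof. by rewrite !(blC c) blNl. Qed.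

Lemma blBl x y c : bl (x - y) c = bl x c - bl y c.
Proof. by rewrite blDl blNl. Qed.

Lemma blBr x y c : bl c (x - y) = bl c x - bl c y.
Proof. by rewrite blDr blNr. Qed.

Lemma bl_diag x : bl x x = 2 * q x.
Proof. by rewrite /qf; field. Qed.

Lemma qfD x y : q (x + y) = q x + bl x y + q y.
Proof. by rewrite /qf blDl !blDr (blC y x); field. Qed.

Lemma qfN x : q (- x) = q x.
Proof. by rewrite /qf blNl blNr opprK. Qed.

Lemma qfB x y : q (x - y) = q x - bl x y + q y.
Proof. by rewrite qfD blNr qfN. Qed.

Lemma qf0 : q 0 = 0.
Proof. by rewrite /qf bl0l mul0r. Qed.

Lemma bl_norm_le x b : `|bl x b| <= `|x| * `|b|.
Proof.
have [->|x0] := eqVneq x 0; first by rewrite bl0l normr0 normr0 mul0r.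
have [_ [/(_ (`|x|^-1 *: x)) bl_le _]] := bl_dual b.
move: bl_le; rewrite normfZV // lexx blZl normrM normfV normr_id => /(_ isT).
by rewrite ler_pdivrMl ?normr_gt0.
Qed.

Lemma qf_norm_le b : `|q b| <= `|b| ^+ 2 / 2.
Proof.
rewrite /qf normrM [`|2^-1|]ger0_norm ?invr_ge0 ?ler0n // ler_pM2r ?invr_gt0 ?ltr0n //.
by rewrite expr2; exact: bl_norm_le.
Qed.

Lemma qf_ge b : - (`|b| ^+ 2 / 2) <= q b.
Proof. by have := qf_norm_le b; rewrite ler_norml => /andP[]. Qed.

Lemma qf_le b : q b <= `|b| ^+ 2 / 2.
Proof. by have := qf_norm_le b; rewrite ler_norml => /andP[]. Qed.

(* Since [b |-> bl . b] is an isometry onto the dual, [|.|^2/2] is its own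
   Fenchel conjugate. *)
Lemma half_sqr_norm_le u (K : R) :
  (forall y, bl y u - `|y| ^+ 2 / 2 <= K) -> `|u| ^+ 2 / 2 <= K.
Proof.
move=> uK; have [u0|u_gt0] := eqVneq `|u| 0.
  by have := uK 0; rewrite u0 bl0l normr0 expr0n /= mul0r subr0.
have up : 0 < `|u| by rewrite lt0r u_gt0 normr_ge0.
apply/ler_addgt0Pr => e e0.
have [_ [_ /(_ (e / `|u|) (divr_gt0 e0 up)) [y [y1 bl_y]]]] := bl_dual u.
pose sg : R := if 0 <= bl y u then 1 else -1.
have sg_bl : sg * bl y u = `|bl y u|.
  rewrite /sg; case: ifP => bl_ge0; first by rewrite mul1r ger0_norm.
  by rewrite mulN1r ltr0_norm // ltNge bl_ge0.
have sg_norm : `|sg| = 1 by rewrite /sg; case: ifP => _; rewrite ?normrN normr1.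
have := uK ((`|u| * sg) *: y).
rewrite blZl -mulrA sg_bl normrZ normrM sg_norm mulr1 normr_id => uyK.
have : `|u| * (`|u| - e / `|u|) <= `|u| * `|bl y u| by rewrite ler_pM2l // ltW.
rewrite mulrBr [_ * (e / _)]mulrC divfK ?u_gt0 // => uy.
have : (`|u| * `|y|) ^+ 2 <= `|u| ^+ 2.
  by rewrite exprMn ler_piMr ?exprn_ge0 ?normr_ge0 // expr_le1.
nra.
Qed.

(* The linear minorant of [{(x, r) | exists (y, s) in E, s + g (y - x) <= r}]
   is continuous because [g] is bounded above near a point, hence it is
   represented through [bl]. *)
Lemma sandwich (E : set (B * R)) (g : B -> R) :
  convex_pairs E -> E !=set0 -> convex_fun g ->
  (exists w (d M : R), 0 < d /\ forall z, `|z - w| < d -> g z <= M) ->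
  (forall y s, E (y, s) -> 0 <= s + g y) ->
  exists c, forall y s z, E (y, s) -> bl y c - bl z c <= s + g z.
Proof.
move=> E_conv [[y0 s0] Ey0] g_conv [w [d [M [d0 gM]]]] E_ge0.
pose Gam := [set p : B * R | exists y s, E (y, s) /\ s + g (y - p.1) <= p.2].
have Gam_conv : convex_pairs Gam.
  move=> x1 r1 x2 r2 l [y1 [s1 [E1 /= g1]]] [y2 [s2 [E2 /= g2]]] l0 l1.
  exists (l *: y1 + (1 - l) *: y2), (l * s1 + (1 - l) * s2); split; first exact: E_conv.
  have -> : l *: y1 + (1 - l) *: y2 - (l *: x1 + (1 - l) *: x2) =
      l *: (y1 - x1) + (1 - l) *: (y2 - x2) by rewrite !scalerBr opprD addrACA.
  have := g_conv (y1 - x1) (y2 - x2) l l0 l1.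
  have : 0 <= 1 - l by rewrite subr_ge0.
  rewrite /=; nra.
have Gam_tot x : exists r, Gam (x, r) by exists (s0 + g (y0 - x)), y0, s0.
have Gam0 r : Gam (0, r) -> 0 <= r.
  by move=> [y [s [Ey]]]; rewrite /= subr0; apply: le_trans (E_ge0 _ _ Ey).
have [phi phi_le] := linear_minorant Gam_conv Gam_tot Gam0.
have phi_ge h : `|h| < d -> - phi h <= s0 + M - phi (y0 - w).
  move=> hd; have /phi_le : Gam (y0 - w - h, s0 + g (h + w)).
    by exists y0, s0; rewrite /= opprB addrCA subKr.
  by rewrite linearB /=; have := gM (h + w); rewrite addrK => /(_ hd); lra.
have phi_cont : continuous phi.
  apply: bounded_linear_continuous; apply/ex_bound; exists (s0 + M - phi (y0 - w)).
  apply/nbhs_norm0P; exists d => // h /= hd; rewrite ler_norml lerNl phi_ge //=.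
  by have := phi_ge (- h); rewrite normrN linearN opprK; apply.
have [c phi_c] : exists c, forall x, phi x = bl x c.
  by apply: bl_surj; split; [exact: linearD | split=> // a x; rewrite linearZ].
exists c => y s z Ey; rewrite -!phi_c -linearB.
by apply: phi_le; exists y, s; rewrite /= subKr.
Qed.

End SSDBSpace.


Section MaxQpositive.
Variables (R : realType) (B : completeNormedModType R) (Q : B -> R).
Hypotheses (QN : forall x, Q (- x) = Q x) (Q0 : Q 0 = 0).

Lemma maxQpositiveP A : maxQpositive Q A <->
  Qpositive Q A /\ forall b, (forall a, A a -> 0 <= Q (b - a)) -> A b.
Proof.
split=> [[[A0 A_pos] A_max]|[[A0 A_pos] A_max]]; split=> //.
  move=> b b_pos; suff <- : A `|` [set b] = A by right.
  apply: A_max; last by move=> x Ax; left.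
  split; first by case: A0 => a Aa; exists a; left.
  move=> x y [Ax|->] [Ay|->]; rewrite ?subrr ?Q0 //; [exact: A_pos | | exact: b_pos].
  by rewrite -QN opprB; apply: b_pos.
move=> A' [_ A'_pos] AA'; apply/seteqP; split => // x A'x.
by apply: A_max => a Aa; apply: A'_pos => //; exact: AA'.
Qed.

End MaxQpositive.

Section SSDBMaximality.
Variables (R : realType) (B : completeNormedModType R) (bl : B -> B -> R).
Hypothesis hB : SSDB bl.
Local Notation q := (qf bl).

Lemma maxQpositive_qP A : maxQpositive q A <->
  Qpositive q A /\ forall b, (forall a, A a -> 0 <= q (b - a)) -> A b.
Proof. exact: (maxQpositiveP (qfN hB) (qf0 hB)). Qed.

Lemma maxQpositive_NqP C : maxQpositive (fun b => - q b) C <->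
  Qpositive (fun b => - q b) C /\ forall b, (forall c, C c -> 0 <= - q (b - c)) -> C b.
Proof. by apply: maxQpositiveP => [x|]; rewrite ?(qfN hB) ?(qf0 hB) ?oppr0. Qed.

Lemma maxQpositive_translate A x :
  maxQpositive q A -> maxQpositive q [set y | A (y + x)].
Proof.
move=> /maxQpositive_qP [[[a Aa] A_pos] A_max]; apply/maxQpositive_qP; split; first split.
- by exists (a - x); rewrite /= subrK.
- by move=> y1 y2 A1 A2; have := A_pos _ _ A1 A2; rewrite opprD addrACA subrr addr0.
- move=> b b_pos; apply: A_max => a' Aa'.
  by have := b_pos (a' - x); rewrite /= subrK opprB addrA => /(_ Aa').
Qed.

Lemma maxQpositive_of_setsum_strict A C p :
  Qpositive q A -> setsum A C = setT -> C p ->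
  (forall z, C z -> z <> p -> q (z - p) < 0) -> maxQpositive q A.
Proof.
move=> A_pos AC_setT Cp C_strict; apply/maxQpositive_qP; split => // b b_pos.
have [a Aa [c Cc bpac]] : setsum A C (b + p) by rewrite AC_setT.
have [cp|cp] := eqVneq c p; first by move: bpac; rewrite cp => /addIr <-.
have cpba : c - p = b - a by apply/eqP; rewrite subr_eq addrAC -bpac addrC addKr.
by have := C_strict c Cc (elimN eqP cp); rewrite cpba ltNge b_pos.
Qed.

End SSDBMaximality.

Section NegExtremal.
Variables (R : realType) (B : completeNormedModType R) (bl : B -> B -> R).
Hypothesis hB : SSDB bl.
Local Notation q := (qf bl).

Definition neg_extremal := [set b : B | q b = - (`|b| ^+ 2 / 2)].

Lemma neg_extremal0 : neg_extremal 0.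
Proof. by rewrite /neg_extremal /= (qf0 hB) normr0 expr0n /= mul0r oppr0. Qed.

Lemma neg_extremal_lt0 z : neg_extremal z -> z <> 0 -> q z < 0.
Proof.
by move=> -> /eqP z0; rewrite oppr_lt0 divr_gt0 // exprn_gt0 // normr_gt0.
Qed.

Lemma neg_extremal_sandwich x : exists c, forall y z,
  bl y c - bl z c <= `|y| ^+ 2 / 2 + bl x y - q x + `|x - z| ^+ 2 / 2.
Proof.
pose f y := `|y| ^+ 2 / 2 + bl x y - q x.
pose g z := `|x - z| ^+ 2 / 2.
have [c fg] : exists c, forall y s z, [set p | f p.1 <= p.2] (y, s) ->
    bl y c - bl z c <= s + g z.
  apply: (sandwich hB).
  - move=> y1 s1 y2 s2 l /= f1 f2 l0 l1; rewrite /f (blDr hB) !(blZr hB).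
    have := half_sqr_norm_convex y1 y2 l0 l1.
    have : 0 <= 1 - l by rewrite subr_ge0.
    by rewrite /f in f1 f2 => ? ?; nra.
  - by exists (0, f 0); rewrite /= lexx.
  - move=> a b l l0 l1; rewrite /g.
    have -> : x - (l *: a + (1 - l) *: b) = l *: (x - a) + (1 - l) *: (x - b).
      by rewrite !scalerBr addrACA -scalerDl subrKC scale1r opprD.
    exact: half_sqr_norm_convex.
  - exists x, 1, (1 / 2); split => // z zx; rewrite /g distrC.
    by rewrite ler_pM2r ?invr_gt0 ?ltr0n // expr_le1 // ltW.
  - move=> y s /= fs; have := qfB hB x y; have := qf_ge hB y.
    by have := qf_le hB (x - y); rewrite /f /g in fs *; lra.
by exists c => y z; apply: fg; rewrite /= lexx.
Qed.

(* The dual element [c] of the sandwich splits [x] as [(x - c) + c]: the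
   sandwich inequality, read through [half_sqr_norm_le] twice, forces equality
   in [qf_ge] at [x - c] and in [qf_le] at [c]. *)
Lemma neg_extremal_decomp x :
  exists w, neg_extremal (x - w) /\ q w = `|w| ^+ 2 / 2.
Proof.
have [c c_le] := neg_extremal_sandwich x.
have cx_le t : `|c - x| ^+ 2 / 2 <= bl x c - q x - (bl t c - `|t| ^+ 2 / 2).
  apply: (half_sqr_norm_le hB) => y; have := c_le y (x - t).
  by rewrite opprB addrCA subrr addr0 (blBl hB) (blBr hB) (blC hB y x); lra.
have c_le' : `|c| ^+ 2 / 2 <= bl x c - q x - `|x - c| ^+ 2 / 2.
  by apply: (half_sqr_norm_le hB) => t; have := cx_le t; rewrite distrC; lra.
exists c; rewrite /neg_extremal /=.
have := qfB hB x c; have := qf_ge hB (x - c); have := qf_le hB c.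
by move: c_le'; split; lra.
Qed.

Lemma maxQpositive_neg_extremal : maxQpositive (fun b => - q b) neg_extremal.
Proof.
apply/(maxQpositive_NqP hB); split; first split.
- by exists 0; exact: neg_extremal0.
- move=> b c /= qb qc; rewrite (qfB hB) qb qc oppr_ge0.
  have /ler_normlP [bc_ge _] := bl_norm_le hB b c.
  by have := sqr_ge0 (`|b| - `|c|); nra.
- move=> b b_pos; have [w [bw qw]] := neg_extremal_decomp b.
  have := b_pos _ bw; rewrite opprB addrCA subrr addr0 qw oppr_ge0 => w_le0.
  suff w0 : w = 0 by rewrite w0 subr0 in bw.
  apply/normr0_eq0/eqP; rewrite -sqrf_eq0 eq_le sqr_ge0 andbT; lra.
Qed.

Lemma Phi_neg_extremal_fin x : Phi_mq bl neg_extremal x \is a fin_num.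
Proof.
rewrite fin_numElt; apply/andP; split.
  apply: (@lt_le_trans _ _ 0%E); first exact: ltNyr.
  apply: ereal_sup_ubound; exists 0; first exact: neg_extremal0.
  by rewrite (blC hB) (bl0l hB) (qf0 hB) oppr0 addr0.
apply: (@le_lt_trans _ _ (`|x| ^+ 2 / 2)%:E); last exact: ltry.
apply: ge_ereal_sup => _ [c /= qc <-]; rewrite lee_fin qc.
have /ler_normlP [xc_ge _] := bl_norm_le hB x c.
by have := sqr_ge0 (`|x| - `|c|); nra.
Qed.

End NegExtremal.

Section MaxPositiveMeetsMaxNegative.
Variables (R : realType) (B : completeNormedModType R) (bl : B -> B -> R).
Hypothesis hB : SSDB bl.
Local Notation q := (qf bl).
Variables A C : set B.
Hypotheses (hA : maxQpositive q A) (hC : maxQpositive (fun b => - q b) C).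
Hypothesis C_fin : forall x, Phi_mq bl C x \is a fin_num.

Let g z := fine (Phi_mq bl C (- z)).

Let g_ge z c : C c -> bl z c + q c <= g z.
Proof.
move=> Cc; rewrite -lee_fin /g fineK //.
by apply: ereal_sup_ubound; exists c; rewrite ?(blNl hB) ?opprK.
Qed.

Let g_le z K : (forall c, C c -> bl z c + q c <= K) -> g z <= K.
Proof.
move=> zK; rewrite -lee_fin /g fineK //.
by apply: ge_ereal_sup => _ [c Cc <-]; rewrite lee_fin (blNl hB) opprK zK.
Qed.

Let g_convex : convex_fun g.
Proof.
move=> a b l l0 l1; apply: g_le => c Cc.
have : 0 <= 1 - l by rewrite subr_ge0.
have := g_ge a Cc; have := g_ge b Cc.
by rewrite (blDl hB) !(blZl hB) => ? ? ?; nra.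
Qed.

Let g_bounded_on_ball : exists w (d M : R), 0 < d /\ forall z, `|z - w| < d -> g z <= M.
Proof.
have f_cont c : continuous (fun z => bl z c + q c).
  by move=> z; apply: cvgD; [exact: bl_continuous | exact: cvg_cst].
have [|w [d [M [d0 wM]]]] := sup_continuous_bounded_on_ball (C := C) f_cont.
  by move=> x; exists (g x) => c; exact: g_ge.
by exists w, d, M; split => // z zw; apply: g_le => c; exact: wM.
Qed.

Let E := [set p : B * R | forall a, A a -> bl p.1 a - q a <= p.2].

Let E_convex : convex_pairs E.
Proof.
move=> y1 s1 y2 s2 l E1 E2 l0 l1 a Aa /=.
have : 0 <= 1 - l by rewrite subr_ge0.
have := E1 a Aa; have := E2 a Aa.
by rewrite (blDl hB) !(blZl hB) /= => ? ? ?; nra.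
Qed.

Let E_qf a : A a -> E (a, q a).
Proof.
by move=> Aa a' Aa'; have := (hA.1.2 _ _ Aa Aa'); rewrite (qfB hB) /=; lra.
Qed.

Let E_ge y s : E (y, s) -> q y <= s.
Proof.
move=> Eys; have [_ A_max] := (maxQpositive_qP hB _).1 hA.
have [Ay|] := pselect (A y); first by have := Eys y Ay; rewrite /= bl_diag; lra.
move=> /(contra_not (A_max y)) /existsNP [a /not_implyP [Aa /negP]].
by rewrite -ltNge (qfB hB) => ya; have := Eys a Aa; rewrite /=; lra.
Qed.

Let g_ge_Nqf y : - q y <= g y.
Proof.
have [_ C_max] := (maxQpositive_NqP hB _).1 hC.
have [Cy|] := pselect (C (- y)).
  by have := g_ge y Cy; rewrite (blNr hB) bl_diag (qfN hB); lra.
move=> /(contra_not (C_max _)) /existsNP [c /not_implyP [Cc /negP]].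
rewrite -ltNge -opprD (qfN hB) (qfD hB) => yc; have := g_ge y Cc; lra.
Qed.

Lemma maxQpositive_meet_opp : exists c0, A c0 /\ C (- c0).
Proof.
have [[[a0 Aa0] _] A_max] := (maxQpositive_qP hB _).1 hA.
have [[_ C_pos] C_max] := (maxQpositive_NqP hB _).1 hC.
have E_g_ge y s : E (y, s) -> 0 <= s + g y.
  by move=> /E_ge; have := g_ge_Nqf y; lra.
have [c0 c0_le] := sandwich hB E_convex (ex_intro _ (a0, q a0) (E_qf Aa0)) g_convex
  g_bounded_on_ball E_g_ge.
have c0_key a c : A a -> C c -> q (c0 + c) <= q (c0 - a).
  move=> Aa Cc; have g_Nc : g (- c) <= - q c.
    apply: g_le => c' Cc'; have := C_pos _ _ Cc' Cc.
    by rewrite (qfB hB) (blNl hB) (blC hB c c'); lra.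
  have := c0_le a (q a) (- c) (E_qf Aa).
  by rewrite (qfD hB) (qfB hB) (blNl hB) (blC hB a) (blC hB c); lra.
have Ac0 : A c0.
  apply: A_max => a Aa; rewrite leNgt; apply/negP => c0a_lt0.
  have CNc0 : C (- c0).
    by apply: C_max => c Cc; have := c0_key a c Aa Cc; rewrite -opprD (qfN hB); lra.
  by have := c0_key a (- c0) Aa CNc0; rewrite subrr (qf0 hB); lra.
exists c0; split=> //; apply: C_max => c Cc; rewrite leNgt; apply/negP.
by rewrite -opprD (qfN hB); have := c0_key c0 c Ac0 Cc; rewrite subrr (qf0 hB); lra.
Qed.

End MaxPositiveMeetsMaxNegative.

Lemma maxQpositive_setsum (R : realType) (B : completeNormedModType R)
    (bl : B -> B -> R) (A C : set B) : SSDB bl ->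
  maxQpositive (qf bl) A -> maxQpositive (fun b => - qf bl b) C ->
  (forall x, Phi_mq bl C x \is a fin_num) -> setsum A C = setT.
Proof.
move=> hB hA hC C_fin; apply/seteqP; split=> // x _.
have [c0 [Ac0x CNc0]] := maxQpositive_meet_opp hB (maxQpositive_translate hB x hA) hC C_fin.
by exists (c0 + x) => //; exists (- c0) => //; rewrite addrAC subrr add0r.
Qed.

Unset Implicit Arguments.

Theorem mainTheorem14 (R : realType) (B : completeNormedModType R)
  (bl : B -> B -> R) (hB : SSDB bl) (A : set B)
  (hA : Qpositive (qf bl) A) :
  (maxQpositive (qf bl) A <->
     (forall C : set B, maxQpositive (fun b => - qf bl b) C ->
        (forall x : B, Phi_mq bl C x \is a fin_num) ->
        setsum A C = setT)) /\
  (maxQpositive (qf bl) A <->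
     (exists (C : set B) (p : B), setsum A C = setT /\ C p /\
        (forall z : B, C z -> z <> p -> qf bl (z - p) < 0))).
Proof.
have neg_extremal_strict z : neg_extremal bl z -> z <> 0 -> qf bl (z - 0) < 0.
  by rewrite subr0; exact: neg_extremal_lt0.
split; split.
- by move=> hmax C; exact: maxQpositive_setsum hB hmax.
- move=> /(_ _ (maxQpositive_neg_extremal hB) (Phi_neg_extremal_fin hB)) AC_setT.
  exact: (maxQpositive_of_setsum_strict hB hA AC_setT (neg_extremal0 hB) neg_extremal_strict).
- move=> hmax; exists (neg_extremal bl), 0; split; last by split; [exact: neg_extremal0 |].
  exact: maxQpositive_setsum hB hmax (maxQpositive_neg_extremal hB) (Phi_neg_extremal_fin hB).
- move=> [C [p [AC_setT [Cp C_strict]]]].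
  exact: (maxQpositive_of_setsum_strict hB hA AC_setT Cp C_strict).
Qed.
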